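(* Let $A,B$ be $n\times n$ matrices and, for integers $i,j\ge0$, let $\mathrm{sym}_{ij}(A,B)$ denote the sum of all (distinct) words in $A$ and $B$ containing exactly $i$ letters $A$ and $j$ letters $B$ (so $\mathrm{sym}_{00}=I$). (a) $[\mathrm{sym}_{i,j+1}(A,B),A]+[\mathrm{sym}_{i+1,j}(A,B),B]=0$ for all $i,j\ge0$. (b) If $A=S$ is symmetric and $B=N$ is skew-symmetric, then $\mathrm{sym}_{ij}(S,N)$ is symmetric if $j$ is even and skew-symmetric if $j$ is odd. (c) Each $\mathrm{sym}_{n-\ell,\ell}(A,B)$, $\ell=0,\dots,n$, is a linear combination of symmetrizers $\mathrm{sym}_{r,s}(A,B)$ with $r+s<n$. (d) For generic pairs $(A,B)$ (i.e., for an open dense set of pairs), the matrices $\mathrm{sym}_{k-\ell,\ell}(A,B)$, $0\le\ell\le k\le n-1$, are linearly independent. The same holds for generic pairs with $A=S$ real symmetric and $B=N$ real skew-symmetric. *)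

From HB Require Import structures.
From mathcomp Require Import all_boot all_order all_algebra.
From mathcomp Require Import all_classical all_reals all_analysis.
Set Implicit Arguments. Unset Strict Implicit. Unset Printing Implicit Defensive.
Import Order.TTheory GRing.Theory Num.Theory.
Local Open Scope ring_scope.

(* A word with i letters A and j letters B is encoded by w : {ffun 'I_(i+j) -> bool}
   with exactly j entries true (true = B, false = A); its value is the ordered
   matrix product of its letters, left to right. *)
Definition word_val (R : pzRingType) (n m : nat) (A B : 'M[R]_n)
  (w : {ffun 'I_m -> bool}) : 'M[R]_n :=
  \big[mulmx/1%:M]_(k < m) (if w k then B else A).

Definition sym_ij (R : pzRingType) (n : nat) (i j : nat) (A B : 'M[R]_n) : 'M[R]_n :=
  \sum_(w : {ffun 'I_(i + j) -> bool} | #|[pred k | w k]| == j) word_val A B w.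

Definition lie_br (R : pzRingType) (n : nat) (X Y : 'M[R]_n) : 'M[R]_n :=
  X *m Y - Y *m X.

Definition mx_is_symmetric (R : pzRingType) (n : nat) (X : 'M[R]_n) : Prop := X^T = X.
Definition mx_is_skew (R : pzRingType) (n : nat) (X : 'M[R]_n) : Prop := X^T = - X.

Definition sym_family_independent (R : fieldType) (n : nat) (A B : 'M[R]_n) : Prop :=
  forall c : nat -> nat -> R,
    \sum_(k < n) \sum_(l < k.+1) c k l *: sym_ij (k - l) l A B = 0 ->
    forall k l : nat, (l <= k)%N -> (k < n)%N -> c k l = 0.

(* Splitting off the first, resp. last, letter of the words gives
   [sym_{i,j} = A sym_{i-1,j} + B sym_{i,j-1} = sym_{i-1,j} A + sym_{i,j-1} B];
   comparing the two yields (a), and transposing yields (b).  The symmetrizers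
   with [k] letters are the coefficients of [(A + t B)^k], so the
   Cayley-Hamilton theorem for the polynomial matrix [A + t B], read
   coefficientwise in [t], gives (c).  For (d), the family is independent iff
   its Gram determinant, a polynomial in the entries of [(A, B)], is nonzero.
   The good pairs thus form an open set, which is dense as soon as one good pair
   exists (restrict the polynomial to the segment joining it to a given pair),
   also among symmetric/skew pairs when that good pair is symmetric/skew.  Such
   a pair is [S = J + J^T], [N = J - J^T] with [J] the lower shift: the
   symmetrizers of [(J, J^T)] count lattice walks in [[0, n)], and
   [S + t N = (1 + t) J + (1 - t) J^T] turns a dependence among the
   symmetrizers of [(S, N)] into relations between walk counts, which an
   elimination from the longest words down shows to be trivial. *)

From HB Require Import structures.
From mathcomp Require Import all_boot all_order all_algebra.
From mathcomp Require Import all_classical all_reals all_analysis.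
From mathcomp Require Import ring zify.
Import Order.TTheory GRing.Theory Num.Theory.
Import numFieldNormedType.Exports.
Local Open Scope classical_set_scope.
Local Open Scope ring_scope.
Set Implicit Arguments. Unset Strict Implicit. Unset Printing Implicit Defensive.

Section SymLen.
Variables (R : pzRingType) (n : nat) (A B : 'M[R]_n).

(* Symmetrizers indexed by the word length [k] and the number [m] of letters
   [B]: [sym_len k m = sym_ij (k - m) m A B] (lemma [sym_ijE]). *)
Fixpoint sym_len (k m : nat) : 'M[R]_n :=
  match k with
  | 0 => if m == 0%N then 1%:M else 0
  | k'.+1 => A *m sym_len k' m + (if m is m'.+1 then B *m sym_len k' m' else 0)
  end.

Definition ffun_cons m (b : bool) (w : {ffun 'I_m -> bool}) : {ffun 'I_m.+1 -> bool} :=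
  [ffun k : 'I_m.+1 => if unlift ord0 k is Some k' then w k' else b].

Lemma card_ffun_cons m b (w : {ffun 'I_m -> bool}) :
  #|[pred k | ffun_cons b w k]| = (b + #|[pred k | w k]|)%N.
Proof.
rewrite -!sum1_card !big_mkcond big_ord_recl /= !inE ffunE unlift_none.
congr (_ + _)%N; rewrite [RHS]big_mkcond.
by apply: eq_bigr => i _; rewrite !inE ffunE liftK.
Qed.

Lemma word_val_cons m b (w : {ffun 'I_m -> bool}) :
  word_val A B (ffun_cons b w) = (if b then B else A) *m word_val A B w.
Proof.
rewrite /word_val big_ord_recl /= ffunE unlift_none; congr (_ *m _).
by apply: eq_bigr => i _; rewrite ffunE liftK.
Qed.

Lemma ffun_cons_bij m :
  bijective (fun p : bool * {ffun 'I_m -> bool} => ffun_cons p.1 p.2).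
Proof.
exists (fun w : {ffun 'I_m.+1 -> bool} => (w ord0, [ffun k => w (lift ord0 k)])).
  case=> b w /=; rewrite ffunE unlift_none; congr (_, _).
  by apply/ffunP => k; rewrite !ffunE liftK.
move=> w /=; apply/ffunP => k; rewrite !ffunE.
by case: unliftP => [j ->|->]; rewrite ?ffunE.
Qed.

Lemma sum_words_sym_len m j :
  \sum_(w : {ffun 'I_m -> bool} | #|[pred k | w k]| == j) word_val A B w = sym_len m j.
Proof.
elim: m j => [|m IH] j /=.
  have card0 (w : {ffun 'I_0 -> bool}) : #|[pred k | w k]| = 0%N.
    by rewrite -sum1_card big_ord0.
  case: eqP => [->|/eqP j0]; last by rewrite big_pred0 // => w; rewrite card0 eq_sym (negbTE j0).
  rewrite (big_pred1 [ffun => false]) ?/word_val ?big_ord0 // => w /=.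
  by rewrite card0 eqxx; apply/esym/eqP/ffunP => -[].
rewrite (reindex _ (onW_bij _ (@ffun_cons_bij m))) /=.
rewrite -(pair_big_dep xpredT (fun b w => #|[pred k | ffun_cons b w k]| == j)
  (fun b w => word_val A B (ffun_cons b w))) /=.
rewrite big_bool /= addrC; congr (_ + _).
  under eq_bigl => w do rewrite card_ffun_cons add0n.
  under eq_bigr => w _ do rewrite word_val_cons.
  by rewrite -mulmx_sumr IH.
under eq_bigl => w do rewrite card_ffun_cons.
under eq_bigr => w _ do rewrite word_val_cons.
case: j => [|j]; first by rewrite big_pred0 // => w.
by rewrite -mulmx_sumr -IH.
Qed.

Lemma sym_ijE i j : sym_ij i j A B = sym_len (i + j) j.
Proof. exact: sum_words_sym_len. Qed.

Lemma sym_lenS k m :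
  sym_len k.+1 m = A *m sym_len k m + (if m is m'.+1 then B *m sym_len k m' else 0).
Proof. by []. Qed.

Lemma sym_lenSr k m :
  sym_len k.+1 m = sym_len k m *m A + (if m is m'.+1 then sym_len k m' *m B else 0).
Proof.
elim: k m => [|k IH] m.
  by case: m => [|[|m]] /=; rewrite ?mulmx1 ?mul1mx ?mulmx0 ?mul0mx ?addr0 ?add0r.
rewrite (sym_lenS k.+1 m).
case: m => [|[|m]];
  rewrite ?[in RHS]sym_lenS ?IH ?mulmxDl ?mulmxDr ?mulmxA ?addr0 ?mul0mx ?mulmx0 ?add0r //.
  by rewrite !addr0 -!addrA [X in _ + X = _]addrC.
by rewrite addrACA.
Qed.

Lemma sym_len_eq0 k m : (k < m)%N -> sym_len k m = 0.
Proof.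
elim: k m => [|k IH] m km; first by case: m km.
rewrite /= IH ?mulmx0 ?add0r; last exact: ltn_trans km.
by case: m km => [//|m] km; rewrite IH ?mulmx0.
Qed.

Lemma lie_br_sym_len k j : lie_br (sym_len k j.+1) A + lie_br (sym_len k j) B = 0.
Proof. by rewrite /lie_br addrACA -opprD -[_ + B *m _]sym_lenS sym_lenSr subrr.
Qed.

Lemma lie_br_sym_ij i j : lie_br (sym_ij i j.+1 A B) A + lie_br (sym_ij i.+1 j A B) B = 0.
Proof. by rewrite !sym_ijE addnS addSn; exact: lie_br_sym_len. Qed.

End SymLen.

Lemma trmx_sym_len (R : comPzRingType) n (S N : 'M[R]_n) k m :
  S^T = S -> N^T = - N -> (sym_len S N k m)^T = (-1) ^+ m *: sym_len S N k m.
Proof.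
move=> trS trN; elim: k m => [|k IH] m.
  by case: m => [|m] /=; rewrite ?trmx1 ?scale1r ?trmx0 ?scaler0.
rewrite [in RHS]sym_lenSr /= linearD /= trmx_mul IH trS -scalemxAl scalerDr.
case: m => [|m] /=; first by rewrite trmx0 scaler0.
by congr (_ + _); rewrite trmx_mul IH trN mulmxN -scalemxAl exprS mulN1r scaleNr.
Qed.

Lemma sym_ij_tr (R : comPzRingType) n (S N : 'M[R]_n) i j :
  mx_is_symmetric S -> mx_is_skew N ->
  (~~ odd j -> mx_is_symmetric (sym_ij i j S N)) /\ (odd j -> mx_is_skew (sym_ij i j S N)).
Proof.
move=> trS trN; rewrite /mx_is_symmetric /mx_is_skew sym_ijE (trmx_sym_len _ _ trS trN).
by rewrite -signr_odd; split=> [/negbTE|] ->; rewrite ?scale1r ?scaleN1r.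
Qed.

Lemma map_sym_len (R R' : comPzRingType) (f : {rmorphism R -> R'}) n (A B : 'M[R]_n) k m :
  map_mx f (sym_len A B k m) = sym_len (map_mx f A) (map_mx f B) k m.
Proof.
elim: k m => [|k IH] m /=; first by case: (m == 0%N); rewrite ?map_mx1 ?map_mx0.
by rewrite map_mxD map_mxM IH; case: m => [|m]; rewrite ?map_mx0 ?map_mxM ?IH.
Qed.

Lemma exprZD_sym_len (R : comPzRingType) n (X Y : 'M[R]_n) (a b : R) k :
  (a *: X + b *: Y) ^+ k = \sum_(m < k.+1) (a ^+ (k - m) * b ^+ m) *: sym_len X Y k m.
Proof.
elim: k => [|k IH]; first by rewrite expr0 big_ord1 expr0 mulr1 scale1r.
rewrite exprS IH mulrDl !mulr_sumr.
under [in RHS]eq_bigr => m _ do rewrite [sym_len X Y k.+1 m]/= scalerDr.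
rewrite big_split /=; congr (_ + _).
  rewrite [in RHS]big_ord_recr /= sym_len_eq0 // mulmx0 scaler0 addr0.
  apply: eq_bigr => m _; rewrite -mulmxE -scalemxAl -scalemxAr scalerA.
  by rewrite subSn ?exprS ?mulrA // -ltnS.
rewrite [in RHS]big_ord_recl /= scaler0 add0r.
apply: eq_bigr => m _; rewrite -mulmxE -scalemxAl -scalemxAr scalerA /=.
by rewrite /bump /= add1n subSS exprS mulrCA mulrA.
Qed.

Section Pencil.
Variables (K : comNzRingType) (n : nat) (A B : 'M[K]_n).

Definition pencil : 'M[{poly K}]_n := map_mx polyC A + 'X *: map_mx polyC B.

Lemma pencil_exp k : pencil ^+ k = \sum_(m < k.+1) 'X^m *: map_mx polyC (sym_len A B k m).
Proof.
rewrite /pencil -[map_mx polyC A]scale1r exprZD_sym_len; apply: eq_bigr => m _.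
by rewrite expr1n mul1r map_sym_len.
Qed.

Lemma coef_pencil_exp k l i j : ((pencil ^+ k) i j)`_l = sym_len A B k l i j.
Proof.
rewrite pencil_exp summxE coef_sum.
under eq_bigr => m _ do rewrite !mxE coefXnM coefC.
have [kl|lk] := ltnP k l.
  rewrite sym_len_eq0 ?mxE // big1 // => m _; case: ltnP => // _.
  by rewrite subn_eq0 leqNgt (leq_trans (ltn_ord m) kl).
rewrite (bigD1 (Ordinal (lk : l < k.+1)%N)) //= ltnn subnn eqxx big1 ?addr0 // => m /eqP ml.
case: ltngtP => // lm; last by case: ml; apply: val_inj.
by rewrite subn_eq0 leqNgt lm.
Qed.

Lemma coef_scale_pencil_exp (p : {poly K}) k l i j :
  ((p *: pencil ^+ k) i j)`_l =
  \sum_(s < k.+1) (if (l < s)%N then 0 else p`_(l - s)) * sym_len A B k s i j.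
Proof.
rewrite mxE pencil_exp summxE mulr_sumr coef_sum; apply: eq_bigr => s _.
by rewrite !mxE mulrA coefMC coefMXn.
Qed.

End Pencil.

Lemma Cayley_Hamilton_exp (K : comNzRingType) n' (M : 'M[K]_n'.+1) :
  M ^+ n'.+1 = - \sum_(i < n'.+1) (char_poly M)`_i *: M ^+ i.
Proof.
have := Cayley_Hamilton M.
rewrite -[X in horner_mx _ X]coefK poly_def size_char_poly linear_sum big_ord_recr /=.
have /monicP := char_poly_monic M; rewrite lead_coefE size_char_poly /= => ->.
rewrite linearZ rmorphXn /= horner_mx_X scale1r => /eqP; rewrite addrC addr_eq0 => /eqP ->.
by congr (- _); apply: eq_bigr => i _; rewrite linearZ rmorphXn /= horner_mx_X.
Qed.

Lemma sym_len_Cayley_Hamilton (K : comNzRingType) n' (A B : 'M[K]_n'.+1) l :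
  exists c : nat -> nat -> K,
    sym_len A B n'.+1 l = \sum_(k < n'.+1) \sum_(s < k.+1) c k s *: sym_len A B k s.
Proof.
pose chi := char_poly (pencil A B).
exists (fun k s => - (if (l < s)%N then 0 else (chi`_k)`_(l - s))).
apply/matrixP => i j; rewrite -coef_pencil_exp Cayley_Hamilton_exp.
rewrite mxE coefN summxE coef_sum -sumrN summxE; apply: eq_bigr => k _.
rewrite coef_scale_pencil_exp -sumrN summxE; apply: eq_bigr => s _.
by rewrite mxE mulNr.
Qed.

Lemma sum_triangle_reindex (V : nmodType) n (F : nat -> nat -> V) :
  \sum_(r < n) \sum_(s < n - r) F (r + s)%N s = \sum_(k < n) \sum_(s < k.+1) F k s.
Proof.
transitivity (\sum_(0 <= r < n) \sum_(0 <= s < n - r) F (r + s)%N s).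
  by rewrite big_mkord; apply: eq_bigr => r _; rewrite big_mkord.
transitivity (\sum_(0 <= k < n) \sum_(0 <= s < k.+1) F k s); last first.
  by rewrite big_mkord; apply: eq_bigr => k _; rewrite big_mkord.
elim: n => [|n IH]; first by rewrite !big_geq.
rewrite [RHS]big_nat_recr //= -IH.
rewrite (@eq_big_nat _ _ _ 0 n.+1 _
   (fun r => \sum_(0 <= s < n - r) F (r + s)%N s + F n (n - r)%N)); last first.
  move=> r /andP[_ rn]; rewrite subSn // big_nat_recr //= subnKC //.
rewrite big_split /=; congr (_ + _).
  by rewrite big_nat_recr //= subnn (@big_geq _ _ _ 0 0) // addr0.
rewrite big_nat_rev /=; apply: eq_big_nat => i /andP[_ hi].
by rewrite add0n subSS subKn.
Qed.

Lemma sym_ij_top_span (K : comNzRingType) n (A B : 'M[K]_n) l : (l <= n)%N ->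
  exists c : nat -> nat -> K,
    sym_ij (n - l) l A B = \sum_(r < n) \sum_(s < n - r) c r s *: sym_ij r s A B.
Proof.
case: n A B => [|n'] A B ln; first by exists (fun _ _ => 0); apply/matrixP => -[].
have [c CH] := sym_len_Cayley_Hamilton A B l.
exists (fun r s => c (r + s)%N s).
rewrite sym_ijE subnK // CH -(sum_triangle_reindex n'.+1 (fun k s => c k s *: sym_len A B k s)).
by under [RHS]eq_bigr do under eq_bigr do rewrite sym_ijE.
Qed.

Section Walks.
Variable n : nat.
Local Open Scope nat_scope.

(* [nwalks k m i s] counts the walks of [k] unit steps inside [0, n) from [i]
   to [s] with [m] up-steps; it is the [(i, s)] entry of [sym_len J J^T k m]
   for the lower shift [J] (lemma [sym_len_shift]). *)
Fixpoint nwalks (k m i s : nat) : nat :=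
  match k with
  | 0 => (m == 0) && (i == s)
  | k'.+1 => (if s.+1 < n then nwalks k' m i s.+1 else 0) +
             (if m is m'.+1 then (if 0 < s then nwalks k' m' i s.-1 else 0) else 0)
  end.

Lemma nwalks_eq0 k m i s : k < m -> nwalks k m i s = 0.
Proof.
elim: k m s => [|k IH] m s km /=; first by case: m km.
rewrite (IH m); last lia.
case: m km => [//|m] km; rewrite (IH m); last lia.
by case: ifP; case: ifP.
Qed.

Lemma nwalks_support k m i s : nwalks k m i s != 0 -> m <= k /\ i + m = s + (k - m).
Proof.
elim: k m s => [|k IH] m s /=.
  by case: m => [|m] //=; case: (i =P s) => [->|] //= _; lia.
case: ifP => hs; case: m => [|m]; rewrite ?addn0 ?add0n.
- by move=> /IH; lia.
- case: ifP => h0; rewrite ?addn0; last by move=> /IH; lia.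
  case: (nwalks k m.+1 i s.+1 =P 0) => [->|/eqP /IH]; last lia.
  by rewrite add0n => /IH; lia.
- by [].
- by case: ifP => h0 // /IH; lia.
Qed.

(* Away from the boundary every arrangement of the [m] up-steps is a walk. *)
Lemma nwalks_interior k m i s : m <= k -> m <= s -> s + (k - m) < n ->
  i + m = s + (k - m) -> nwalks k m i s = 'C(k, m).
Proof.
elim: k m s => [|k IH] m s.
  by case: m => //= _ _ _; rewrite !addn0 => ->; rewrite eqxx.
move=> mk ms sn e /=.
have [mk'|mk'] := leqP m k.
  have h1 : s.+1 < n by clear IH; lia.
  rewrite h1 (IH m s.+1) //; try (clear IH; lia).
  case: m mk ms sn e mk' h1 => [|m] mk ms sn e mk' h1; first by rewrite addn0 bin0.
  have h2 : 0 < s by clear IH; lia.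
  rewrite h2 (IH m s.-1) ?binS //; clear IH; lia.
have em : m = k.+1 by clear IH; lia.
subst m; rewrite nwalks_eq0 // if_same add0n.
have h2 : 0 < s by clear IH; lia.
rewrite h2 (IH k s.-1) ?binn //; clear IH; lia.
Qed.

Lemma nwalks_le_bin k m i s : nwalks k m i s <= 'C(k, m).
Proof.
elim: k m s => [|k IH] m s /=; first by case: m => //=; case: (i == s).
case: m => [|m]; rewrite ?bin0 ?binS.
  by rewrite addn0; case: ifP => // _; rewrite -(bin0 k) IH.
by apply: leq_add; case: ifP.
Qed.

(* Ending below level [m], some arrangement of the up-steps leaves [0, n). *)
Lemma nwalks_lt_bin k m i s : s < m -> m <= k -> nwalks k m i s < 'C(k, m).
Proof.
elim: k m s => [|k IH] m s; first by case: m.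
move=> sm mk /=; case: m sm mk => [//|m] sm mk.
rewrite binS.
have h1 : (if s.+1 < n then nwalks k m.+1 i s.+1 else 0) <= 'C(k, m.+1).
  by case: ifP => // _; apply: nwalks_le_bin.
case: s sm h1 => [|s] sm h1 /=; last by rewrite -addnS; apply: leq_add => //; apply: IH; lia.
rewrite addn0; apply: (leq_ltn_trans h1); rewrite -[X in X < _]addn0 ltn_add2l.
by rewrite bin_gt0; lia.
Qed.

End Walks.

Section Witness.
Variables (R : comNzRingType) (n : nat).

Definition shift_mx : 'M[R]_n := \matrix_(i, j) ((i : nat) == j.+1)%:R.
Definition witness_sym : 'M[R]_n := shift_mx + shift_mx^T.
Definition witness_skew : 'M[R]_n := shift_mx - shift_mx^T.

Lemma witness_sym_is_symmetric : mx_is_symmetric witness_sym.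
Proof. by rewrite /mx_is_symmetric linearD /= trmxK addrC. Qed.

Lemma witness_skew_is_skew : mx_is_skew witness_skew.
Proof. by rewrite /mx_is_skew linearB /= trmxK opprB. Qed.

Lemma sum_ord_eq_nat (F : nat -> R) j :
  \sum_(r < n) F r * ((r : nat) == j)%:R = if (j < n)%N then F j else 0.
Proof.
under eq_bigr => r _ do rewrite mulr_natr mulrb.
by rewrite -big_mkcond /= (big_ord1_eq _ F).
Qed.

Lemma sym_len_shift k m (i s : 'I_n) : sym_len shift_mx shift_mx^T k m i s = (nwalks n k m i s)%:R.
Proof.
elim: k m s => [|k IH] m s; first by rewrite /=; case: (m == 0%N); rewrite mxE.
rewrite sym_lenSr mxE [nwalks n k.+1 m i s]/= natrD; congr (_ + _).
  rewrite mxE; under eq_bigr => r _ do rewrite IH mxE.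
  by rewrite (sum_ord_eq_nat (fun x => (nwalks n k m i x)%:R)); case: ifP.
case: m => [|m]; rewrite mxE //.
under eq_bigr => r _ do rewrite IH !mxE.
case: s => [[|s] hs] /=; first by rewrite big1 // => r _; rewrite mulr0.
under eq_bigr => r _ do rewrite eqSS eq_sym.
by rewrite (sum_ord_eq_nat (fun x => (nwalks n k m i x)%:R)) ifT // (ltn_trans _ hs).
Qed.

(* The pencil of the witness pair is [(1 + t) J + (1 - t) J^T]. *)
Definition witness_poly (k m : nat) : {poly R} := (1 + 'X) ^+ (k - m) * (1 - 'X) ^+ m.

Lemma sym_len_witness k l (i s : 'I_n) :
  sym_len witness_sym witness_skew k l i s =
  \sum_(m < k.+1) (witness_poly k m)`_l * (nwalks n k m i s)%:R.
Proof.
rewrite -coef_pencil_exp.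
have -> : pencil witness_sym witness_skew =
    (1 + 'X) *: map_mx polyC shift_mx + (1 - 'X) *: map_mx polyC shift_mx^T.
  apply/matrixP => a b; rewrite !mxE polyCD polyCB.
  set x := _%:R; set y := _%:R; ring.
rewrite exprZD_sym_len summxE coef_sum; apply: eq_bigr => m _.
by rewrite -map_sym_len !mxE coefMC sym_len_shift.
Qed.

End Witness.

Lemma sum_triangle_single (V : zmodType) n (F : nat -> nat -> V) K m :
  (K < n)%N -> (m <= K)%N ->
  (forall k m', (k < n)%N -> (m' <= k)%N -> (k, m') != (K, m) -> F k m' = 0) ->
  \sum_(k < n) \sum_(m' < k.+1) F k m' = F K m.
Proof.
move=> Kn mK F0.
rewrite (bigD1 (Ordinal Kn)) //= [X in _ + X]big1 ?addr0; last first.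
  move=> k /eqP kK; apply: big1 => m' _; apply: F0 => //; first by rewrite -ltnS.
  by rewrite xpair_eqE negb_and; apply/orP; left; apply/eqP => e; apply: kK; apply: val_inj.
rewrite (bigD1 (Ordinal (mK : m < K.+1)%N)) //= [X in _ + X]big1 ?addr0 // => m' /eqP mm.
apply: F0 => //; first by rewrite -ltnS.
by rewrite xpair_eqE negb_and; apply/orP; right; apply/eqP => e; apply: mm; apply: val_inj.
Qed.

Section WalkElimination.
Variables (R : numDomainType) (n : nat) (g : nat -> nat -> R).
Hypothesis walk_rel : forall i s : nat, (i < n)%N -> (s < n)%N ->
  \sum_(k < n) \sum_(m < k.+1) (nwalks n k m i s)%:R * g k m = 0.

Variable K : nat.
Hypotheses (Kn : (K < n)%N)
  (g_above : forall k m, (K < k)%N -> (k < n)%N -> (m <= k)%N -> g k m = 0).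

Lemma walk_rel_single i s m : (i < n)%N -> (s < n)%N -> (m <= K)%N ->
  (forall k m', (k <= K)%N -> (m' <= k)%N -> (k, m') != (K, m) -> nwalks n k m' i s = 0%N) ->
  (nwalks n K m i s)%:R * g K m = 0.
Proof.
move=> i_n s_n mK w0; rewrite -(walk_rel i_n s_n).
rewrite (@sum_triangle_single _ _ (fun k m => (nwalks n k m i s)%:R * g k m) K m Kn mK) //.
move=> k m' kn m'k km.
have [Kk|kK] := ltnP K k; first by rewrite g_above ?mulr0.
by rewrite w0 ?mul0r.
Qed.

Lemma walk_elim_bottom : g K 0 = 0.
Proof.
have /(walk_rel_single Kn)/(_ (leq0n K)) : (0 < n)%N by lia.
rewrite nwalks_interior ?bin0 ?mul1r //; try lia.
apply=> k m' kK m'k; rewrite xpair_eqE => km.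
by apply/eqP; apply: contraNT km => /nwalks_support; lia.
Qed.

Lemma walk_elim_top : g K K = 0.
Proof.
have /walk_rel_single/(_ Kn (leqnn K)) : (0 < n)%N by lia.
rewrite nwalks_interior ?binn ?mul1r //; try lia.
apply=> k m' kK m'k; rewrite xpair_eqE => km.
by apply/eqP; apply: contraNT km => /nwalks_support; lia.
Qed.

(* Subtracting the relation at [(u - 1, m - 1)] from the one at [(u, m)] cancels
   every lower level, where both walk counts are binomial coefficients. *)
Lemma walk_elim_inner m : (0 < m < K)%N -> g K m = 0.
Proof.
move=> /andP[m0 mK]; set u := (K - m)%N.
have rel_diff : \sum_(k < n) \sum_(m' < k.+1)
    ((nwalks n k m' u m)%:R - (nwalks n k m' u.-1 m.-1)%:R) * g k m' = 0.
  under eq_bigr do under eq_bigr do rewrite mulrBl.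
  under eq_bigr do rewrite sumrB.
  by rewrite sumrB !walk_rel ?subrr //; rewrite /u; lia.
move: rel_diff; rewrite (@sum_triangle_single _ _ (fun k m' =>
    ((nwalks n k m' u m)%:R - (nwalks n k m' u.-1 m.-1)%:R) * g k m') K m Kn (ltnW mK)).
  rewrite nwalks_interior; try (rewrite /u; lia).
  move/eqP; rewrite mulf_eq0 subr_eq0 eqr_nat => /orP[/eqP walks_eq|/eqP //].
  by have := @nwalks_lt_bin n K m u.-1 m.-1 ltac:(lia) (ltnW mK); rewrite -walks_eq ltnn.
move=> k m' kn m'k; rewrite xpair_eqE => km.
have [Kk|kK] := ltnP K k; first by rewrite g_above ?mulr0.
have [e|ne] := eqVneq (u + m')%N (m + (k - m'))%N.
  rewrite !nwalks_interior ?subrr ?mul0r //; move: km e; rewrite /u; lia.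
rewrite (_ : nwalks n k m' u m = 0%N); last first.
  by apply/eqP; apply: contraNT ne => /nwalks_support [_ ->].
rewrite (_ : nwalks n k m' u.-1 m.-1 = 0%N) ?subrr ?mul0r //.
by apply/eqP; apply: contraNT ne => /nwalks_support; rewrite /u; lia.
Qed.

Lemma walk_elim_level m : (m <= K)%N -> g K m = 0.
Proof.
move=> mK; have [->|m0] := posnP m; first exact: walk_elim_bottom.
have [mK'|Km|->] := ltngtP m K; last exact: walk_elim_top.
  by apply: walk_elim_inner; rewrite m0.
by move: mK; rewrite leqNgt Km.
Qed.

End WalkElimination.

Lemma walk_rel_eq0 (R : numDomainType) n (g : nat -> nat -> R) :
  (forall i s : nat, (i < n)%N -> (s < n)%N ->
    \sum_(k < n) \sum_(m < k.+1) (nwalks n k m i s)%:R * g k m = 0) ->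
  forall k m, (k < n)%N -> (m <= k)%N -> g k m = 0.
Proof.
move=> walk_rel; suff: forall d k, (k < n)%N -> (n - k <= d)%N -> forall m, (m <= k)%N -> g k m = 0.
  by move=> gk k m kn; apply: (gk (n - k)%N).
elim=> [|d IH] k kn kd m; first lia.
apply: (walk_elim_level walk_rel kn) => // k' m' kk' k'n m'k'; apply: (IH k') => //; lia.
Qed.

Section HomogSpan.
Variables (R : comNzRingType) (u v : {poly R}).

Definition homog_span (k : nat) (x : {poly R}) :=
  exists mu : nat -> R, x = \sum_(m < k.+1) mu m *: (u ^+ (k - m) * v ^+ m).

Lemma homog_span1 : homog_span 0 1.
Proof. by exists (fun _ => 1); rewrite big_ord1 !expr0 mulr1 scale1r. Qed.

Lemma homog_spanMl k x : homog_span k x -> homog_span k.+1 (u * x).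
Proof.
case=> mu ->; exists (fun m => if (m <= k)%N then mu m else 0).
rewrite [in RHS]big_ord_recr /= ltnn scale0r addr0 mulr_sumr; apply: eq_bigr => m _.
by rewrite -ltnS ltn_ord -scalerAr mulrA -exprS subSn // -ltnS.
Qed.

Lemma homog_spanMr k x : homog_span k x -> homog_span k.+1 (v * x).
Proof.
case=> mu ->; exists (fun m => if m is m'.+1 then mu m' else 0).
rewrite [in RHS]big_ord_recl /= scale0r add0r mulr_sumr; apply: eq_bigr => m _.
by rewrite -scalerAr /bump /= add1n subSS exprS; congr (_ *: _); ring.
Qed.

Lemma homog_spanD k x y : homog_span k x -> homog_span k y -> homog_span k (x + y).
Proof.
case=> mu -> [nu ->]; exists (fun m => mu m + nu m).
by rewrite -big_split /=; apply: eq_bigr => m _; rewrite scalerDl.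
Qed.

Lemma homog_spanN k x : homog_span k x -> homog_span k (- x).
Proof.
case=> mu ->; exists (fun m => - mu m).
by rewrite -sumrN; apply: eq_bigr => m _; rewrite scaleNr.
Qed.

Lemma homog_span_change_basis p q : homog_span (p + q) ((u - v) ^+ p * (u + v) ^+ q).
Proof.
elim: p => [|p IH].
  rewrite expr0 mul1r; elim: q => [|q IHq]; first exact: homog_span1.
  by rewrite exprS mulrDl; apply: homog_spanD; [apply: homog_spanMl | apply: homog_spanMr].
rewrite exprS -mulrA mulrBl addSn; apply: homog_spanD; first exact: homog_spanMl.
exact/homog_spanN/homog_spanMr.
Qed.

End HomogSpan.

(* [(1 + X) - (1 - X) = 2 X] and [(1 + X) + (1 - X) = 2], so every [X^p] with
   [p <= k] is a combination of the [witness_poly k m]. *)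
Lemma witness_poly_coef_eq0 (R : numDomainType) k (c : nat -> R) :
  (forall m, (m <= k)%N -> \sum_(l < k.+1) c l * (witness_poly R k m)`_l = 0) ->
  forall p, (p <= k)%N -> c p = 0.
Proof.
move=> c_orth p pk.
have [mu e] := homog_span_change_basis (1 + 'X : {poly R}) (1 - 'X) p (k - p).
rewrite subnKC // in e.
have e2X : (1 + 'X - (1 - 'X)) ^+ p * (1 + 'X + (1 - 'X)) ^+ (k - p) =
           (2 ^+ k)%:P * 'X^p :> {poly R}.
  rewrite (_ : 1 + 'X - (1 - 'X) = 2%:P * 'X); last by rewrite polyC_natr; ring.
  rewrite (_ : 1 + 'X + (1 - 'X) = 2%:P); last by rewrite polyC_natr; ring.
  by rewrite exprMn -!rmorphXn mulrAC -rmorphM -natrM -expnD subnKC.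
have : \sum_(l < k.+1) c l * ((2 ^+ k)%:P * 'X^p : {poly R})`_l = 0.
  rewrite -e2X e; under eq_bigr => l _ do rewrite coef_sum mulr_sumr.
  rewrite exchange_big /= big1 // => m _.
  under eq_bigr => l _ do rewrite coefZ mulrCA.
  by rewrite -mulr_sumr c_orth ?mulr0 // -ltnS.
under eq_bigr => l _ do rewrite coefCM coefXn mulrCA.
rewrite (bigD1 (Ordinal (pk : p < k.+1)%N)) //= eqxx big1 ?addr0; last first.
  move=> l /eqP lp; rewrite (_ : (l == p :> nat) = false) ?mulr0 //.
  by apply/negbTE/eqP => lp'; apply: lp; apply: val_inj.
by move/eqP; rewrite mulr1 mulf_eq0 expf_eq0 pnatr_eq0 andbF => /eqP.
Qed.

Lemma witness_independent (R : numFieldType) n :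
  sym_family_independent (witness_sym R n) (witness_skew R n).
Proof.
move=> c sum0 k l lk kn.
pose g k m := \sum_(l < k.+1) c k l * (witness_poly R k m)`_l.
have walk_rel i s : (i < n)%N -> (s < n)%N ->
    \sum_(k < n) \sum_(m < k.+1) (nwalks n k m i s)%:R * g k m = 0.
  move=> i_n s_n; have /matrixP/(_ (Ordinal i_n) (Ordinal s_n)) := sum0.
  rewrite summxE mxE => sum0_entry; rewrite -[RHS]sum0_entry.
  apply: eq_bigr => k' _; rewrite summxE.
  under [in RHS]eq_bigr => l' _ do
    rewrite mxE sym_ijE (subnK (ltn_ord l' : (l' <= k')%N)) sym_len_witness mulr_sumr.
  rewrite exchange_big /=; apply: eq_bigr => m _.
  by rewrite /g mulr_sumr; apply: eq_bigr => l' _; rewrite mulrC -mulrA.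
apply: (witness_poly_coef_eq0 _ lk) => m mk.
exact: (walk_rel_eq0 walk_rel kn).
Qed.

Section Gram.
Variables (K : comPzRingType) (n : nat).
Local Notation index_pair := ('I_n * 'I_n)%type.

Definition lower_pair (p : index_pair) := (p.2 <= p.1)%N.

Definition mx_dot (X Y : 'M[K]_n) : K := \sum_(p : index_pair) X p.1 p.2 * Y p.1 p.2.

(* The Gram matrix of the family [sym_len A B k l], [l <= k < n], indexed by
   all pairs [(k, l)]: the pairs with [k < l] get an identity row and column. *)
Definition gram_entry (A B : 'M[K]_n) (p q : index_pair) : K :=
  if lower_pair p then
    (if lower_pair q then mx_dot (sym_len A B p.1 p.2) (sym_len A B q.1 q.2) else 0)
  else (p == q)%:R.

Definition sym_gram (A B : 'M[K]_n) : 'M[K]_#|{: index_pair}| :=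
  \matrix_(a, b) gram_entry A B (enum_val a) (enum_val b).

Definition sym_gram_det (A B : 'M[K]_n) : K := \det (sym_gram A B).

Lemma mx_dot_suml (T : finType) (P : pred T) (a : T -> K) (X : T -> 'M[K]_n) Y :
  mx_dot (\sum_(t | P t) a t *: X t) Y = \sum_(t | P t) a t * mx_dot (X t) Y.
Proof.
rewrite /mx_dot; under eq_bigr => p _ do rewrite summxE mulr_suml.
rewrite exchange_big /=; apply: eq_bigr => t _; rewrite mulr_sumr.
by apply: eq_bigr => p _; rewrite mxE mulrA.
Qed.

Lemma mx_dotC X Y : mx_dot X Y = mx_dot Y X.
Proof. by apply: eq_bigr => p _; rewrite mulrC. Qed.

Lemma sum_lower_pairs (V : zmodType) (F : nat -> nat -> V) :
  \sum_(p : index_pair | lower_pair p) F p.1 p.2 = \sum_(k < n) \sum_(l < k.+1) F k l.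
Proof.
rewrite -(pair_big_dep xpredT (fun (k : 'I_n) (l : 'I_n) => (l <= k)%N) (fun k l => F k l)) /=.
by apply: eq_bigr => k _; rewrite (big_ord_widen n (F k)).
Qed.

Lemma gram_entry_sum (x : index_pair -> K) A B q :
  \sum_p x p * gram_entry A B p q =
  if lower_pair q then mx_dot (\sum_(p | lower_pair p) x p *: sym_len A B p.1 p.2)
                              (sym_len A B q.1 q.2)
  else x q.
Proof.
rewrite /gram_entry; case: ifP => lq.
  rewrite mx_dot_suml [RHS]big_mkcond; apply: eq_bigr => p _.
  by case: ifP => lp //; rewrite (_ : (p == q) = false) ?mulr0 //; apply: contraFF lp => /eqP ->.
rewrite (bigD1 q) //= lq eqxx mulr1 big1 ?addr0 // => p pq.
by case: ifP; rewrite ?mulr0 // (negbTE pq) mulr0.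
Qed.

End Gram.

Lemma sym_gram_det_map (K K' : comPzRingType) n (f : {rmorphism K -> K'}) (A B : 'M[K]_n) :
  f (sym_gram_det A B) = sym_gram_det (map_mx f A) (map_mx f B).
Proof.
rewrite /sym_gram_det /sym_gram -det_map_mx; congr (\det _).
apply/matrixP => a b; rewrite !mxE /gram_entry.
case: ifP => _; last by rewrite rmorph_nat.
case: ifP => _; last by rewrite rmorph0.
rewrite /mx_dot rmorph_sum; apply: eq_bigr => p _.
by rewrite rmorphM -!map_sym_len !mxE.
Qed.

Section GramReal.
Variables (R : realFieldType) (n : nat) (A B : 'M[R]_n).

Lemma mx_dot_ge0 (X : 'M[R]_n) : 0 <= mx_dot X X.
Proof. by apply: sumr_ge0 => p _; rewrite -expr2 sqr_ge0. Qed.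

Lemma mx_dot_eq0 (X : 'M[R]_n) : mx_dot X X = 0 -> X = 0.
Proof.
move=> X0; apply/matrixP => i j; rewrite mxE.
have sq0 : \sum_(p : 'I_n * 'I_n) X p.1 p.2 ^+ 2 = 0.
  by rewrite -[RHS]X0; apply: eq_bigr => p _; rewrite expr2.
have /eqP := @psumr_eq0P _ _ xpredT _ (fun p _ => sqr_ge0 (X p.1 p.2)) sq0 (i, j) isT.
by rewrite sqrf_eq0 => /eqP.
Qed.

Lemma sym_gram_det_neq0_independent : sym_gram_det A B != 0 -> sym_family_independent A B.
Proof.
move=> det_neq0 c sum0.
pose x (p : 'I_n * 'I_n) := if lower_pair p then c p.1 p.2 else 0.
have comb0 : \sum_(p | lower_pair p) x p *: sym_len A B p.1 p.2 = 0.
  rewrite -[RHS]sum0 -(@sum_lower_pairs n _ (fun k l => c k l *: sym_ij (k - l) l A B)).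
  by apply: eq_bigr => p lp; rewrite /x lp sym_ijE subnK.
pose v := \row_(a < #|{: 'I_n * 'I_n}|) x (enum_val a).
have kernel : v *m sym_gram A B = 0.
  apply/rowP => b; rewrite !mxE.
  under eq_bigr => a _ do rewrite !mxE.
  rewrite -(big_enum_val (fun p => x p * gram_entry A B p (enum_val b))) /=.
  rewrite gram_entry_sum comb0; case: ifP => lq; last by rewrite /x lq.
  by rewrite /mx_dot big1 // => p _; rewrite mxE mul0r.
have v0 : v = 0.
  by apply/eqP; apply: contraNT det_neq0 => nz; apply/det0P; exists v.
move=> k l lk kn.
have := congr1 (fun v : 'rV_ _ => v 0 (enum_rank (Ordinal kn, Ordinal (leq_ltn_trans lk kn)))) v0.
by rewrite !mxE enum_rankK /x /lower_pair /= lk.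
Qed.

Lemma gram_quadratic_form (x : 'I_n * 'I_n -> R) :
  \sum_q x q * (\sum_p x p * gram_entry A B p q) =
  mx_dot (\sum_(p | lower_pair p) x p *: sym_len A B p.1 p.2)
         (\sum_(p | lower_pair p) x p *: sym_len A B p.1 p.2)
  + \sum_(q | ~~ lower_pair q) x q ^+ 2.
Proof.
under eq_bigr => q _ do rewrite gram_entry_sum.
rewrite (bigID (@lower_pair n)) /=; congr (_ + _).
  under eq_bigr => q lq do rewrite lq mx_dotC.
  by rewrite -mx_dot_suml.
by apply: eq_bigr => q /negbTE ->; rewrite expr2.
Qed.

Lemma sym_gram_kernel_form (v : 'rV_#|{: 'I_n * 'I_n}|) : v *m sym_gram A B = 0 ->
  \sum_q v 0 (enum_rank q) * (\sum_p v 0 (enum_rank p) * gram_entry A B p q) = 0.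
Proof.
move=> kernel; transitivity (\sum_b v 0 b * (v *m sym_gram A B) 0 b).
  rewrite (big_enum_val (fun q => v 0 (enum_rank q) * _)) /=.
  apply: eq_bigr => b _; rewrite enum_valK mxE; congr (_ * _).
  rewrite (big_enum_val (fun p => v 0 (enum_rank p) * gram_entry A B p (enum_val b))) /=.
  by apply: eq_bigr => a _; rewrite enum_valK !mxE.
by rewrite kernel big1 // => b _; rewrite mxE mulr0.
Qed.

Lemma independent_sym_gram_det_neq0 : sym_family_independent A B -> sym_gram_det A B != 0.
Proof.
move=> indep; apply/negP => /det0P [v nz /sym_gram_kernel_form].
pose x (p : 'I_n * 'I_n) : R := v 0 (enum_rank p).
pose V := \sum_(p | lower_pair p) x p *: sym_len A B p.1 p.2.
rewrite -/(x _) gram_quadratic_form -/V => form0.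
have /andP[/eqP/mx_dot_eq0 V0 /eqP upper0] :
    (mx_dot V V == 0) && (\sum_(q | ~~ lower_pair q) x q ^+ 2 == 0).
  by rewrite -paddr_eq0 ?form0 ?mx_dot_ge0 //; apply: sumr_ge0 => q _; rewrite sqr_ge0.
have x_upper q : ~~ lower_pair q -> x q = 0.
  move=> uq; have /eqP := psumr_eq0P (fun q _ => sqr_ge0 (x q)) upper0 uq.
  by rewrite sqrf_eq0 => /eqP.
pose c (k l : nat) := \sum_(p : 'I_n * 'I_n | (p.1 == k :> nat) && (p.2 == l :> nat)) x p.
have cE (p : 'I_n * 'I_n) : c p.1 p.2 = x p.
  by rewrite /c (big_pred1 p) // => q; rewrite xpair_eqE.
have c0 : \sum_(k < n) \sum_(l < k.+1) c k l *: sym_ij (k - l) l A B = 0.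
  rewrite -(@sum_lower_pairs n _ (fun k l => c k l *: sym_ij (k - l) l A B)) -[RHS]V0.
  by apply: eq_bigr => p lp; rewrite cE sym_ijE subnK.
have x_lower q : lower_pair q -> x q = 0.
  by move=> lq; rewrite -cE (indep c c0 _ _ lq (ltn_ord _)).
apply: (negP nz); apply/eqP/rowP => b; rewrite mxE.
have := x_lower (enum_val b); have := x_upper (enum_val b); rewrite /x enum_valK.
by case: (lower_pair _) => [_ ->|-> //].
Qed.

End GramReal.

Section RealFunctionContinuity.
Variables (R : numFieldType) (T : topologicalType).

Lemma continuous_addr (f g : T -> R) :
  continuous f -> continuous g -> continuous (fun x => f x + g x).
Proof. by move=> f_cont g_cont x; exact: (@continuousD R R^o _ f g x (f_cont x) (g_cont x)). Qed.

Lemma continuous_mulr (f g : T -> R) :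
  continuous f -> continuous g -> continuous (fun x => f x * g x).
Proof. by move=> f_cont g_cont x; exact: (@continuousM R _ f g x (f_cont x) (g_cont x)). Qed.

Lemma continuous_sum (I : Type) (r : seq I) (P : pred I) (F : I -> T -> R) :
  (forall i, continuous (F i)) -> continuous (fun x => \sum_(i <- r | P i) F i x).
Proof.
by move=> F_cont; apply: continuous_big => [|i _]; [exact: add_continuous | exact: F_cont].
Qed.

Lemma continuous_prod (I : Type) (r : seq I) (P : pred I) (F : I -> T -> R) :
  (forall i, continuous (F i)) -> continuous (fun x => \prod_(i <- r | P i) F i x).
Proof.
by move=> F_cont; apply: continuous_big => [|i _]; [exact: mul_continuous | exact: F_cont].
Qed.

End RealFunctionContinuity.

Section Continuity.
Variables (R : numFieldType) (n : nat).
Local Notation pairs := ('M[R]_n * 'M[R]_n)%type.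

Lemma continuous_fst_entry i j : continuous (fun AB : pairs => AB.1 i j).
Proof.
move=> AB; apply: (@continuous_comp _ _ _ fst (fun M : 'M[R]_n => M i j)).
  exact: cvg_fst.
exact: coord_continuous.
Qed.

Lemma continuous_snd_entry i j : continuous (fun AB : pairs => AB.2 i j).
Proof.
move=> AB; apply: (@continuous_comp _ _ _ snd (fun M : 'M[R]_n => M i j)).
  exact: cvg_snd.
exact: coord_continuous.
Qed.

Lemma continuous_sym_len_entry k m i j :
  continuous (fun AB : pairs => sym_len AB.1 AB.2 k m i j).
Proof.
elim: k m i j => [|k IH] m i j /=.
  by case: (m == 0%N); under eq_fun do rewrite mxE; exact: cst_continuous.
under eq_fun do rewrite !mxE.
apply: continuous_addr.
  by apply: continuous_sum => r; apply: continuous_mulr; [exact: continuous_fst_entry | exact: IH].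
case: m => [|m]; first by under eq_fun do rewrite mxE; exact: cst_continuous.
under eq_fun do rewrite mxE.
by apply: continuous_sum => r; apply: continuous_mulr; [exact: continuous_snd_entry | exact: IH].
Qed.

Lemma continuous_sym_gram_det : continuous (fun AB : pairs => sym_gram_det AB.1 AB.2).
Proof.
have entry_cont p q : continuous (fun AB : pairs => gram_entry AB.1 AB.2 p q).
  rewrite /gram_entry; case: (lower_pair p); last exact: cst_continuous.
  case: (lower_pair q); last exact: cst_continuous.
  apply: continuous_sum => ij; apply: continuous_mulr; exact: continuous_sym_len_entry.
apply: continuous_sum => s; apply: continuous_mulr; first exact: cst_continuous.
by apply: continuous_prod => i; under eq_fun do rewrite mxE; exact: entry_cont.
Qed.

End Continuity.

Lemma poly_nonroot_near0 (R : realFieldType) (q : {poly R}) (e : R) : q != 0 -> 0 < e ->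
  exists t, 0 < t < e /\ q.[t] != 0.
Proof.
move=> q0 e0; apply/not_existsP => all_roots.
pose s := [seq e / (i.+2)%:R | i <- iota 0 (size q)].
have s_uniq : uniq s.
  rewrite map_inj_uniq ?iota_uniq // => i j /(mulfI (lt0r_neq0 e0)) /invr_inj /eqP.
  by rewrite eqr_nat => /eqP [].
have s_roots : all (root q) s.
  apply/allP => x /mapP [i _ ->]; apply/negPn/negP => nr; apply: (all_roots (e / (i.+2)%:R)).
  split=> //; apply/andP; split; first by rewrite divr_gt0 // ltr0n.
  by rewrite ltr_pdivrMr ?ltr0n // ltr_pMr // ltr1n.
by have := max_poly_roots q0 s_roots s_uniq; rewrite size_map size_iota ltnn.
Qed.

Section Density.
Variables (R : realFieldType) (n : nat).

Lemma sym_gram_det_segment (A B A0 B0 : 'M[R]_n) : exists q : {poly R}, forall t,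
  q.[t] = sym_gram_det (A + t *: (A0 - A)) (B + t *: (B0 - B)).
Proof.
exists (sym_gram_det (map_mx polyC A + 'X *: map_mx polyC (A0 - A))
                     (map_mx polyC B + 'X *: map_mx polyC (B0 - B))) => t.
rewrite -horner_evalE sym_gram_det_map; congr sym_gram_det; apply/matrixP => i j;
  by rewrite !mxE /= horner_evalE hornerD hornerM hornerX !hornerC.
Qed.

(* Along the segment from [(A, B)] to [(A0, B0)] the Gram determinant is a
   polynomial in the parameter, nonzero at [1], hence nonzero at parameters
   arbitrarily close to [0]. *)
Lemma sym_gram_det_neq0_near (V : set ('M[R]_n * 'M[R]_n)) (A B A0 B0 : 'M[R]_n) :
  sym_gram_det A0 B0 != 0 -> nbhs (A, B) V ->
  exists t : R, V (A + t *: (A0 - A), B + t *: (B0 - B)) /\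
    sym_gram_det (A + t *: (A0 - A)) (B + t *: (B0 - B)) != 0.
Proof.
move=> det0 AB_V.
have segment_cont (M M0 : 'M[R]_n) : {for 0, continuous (fun t : R => M + t *: (M0 - M))}.
  by apply: cvgD; [exact: cvg_cst | apply: cvgZr_tmp; exact: cvg_id].
have near0 : nbhs (0 : R) (fun t => V (A + t *: (A0 - A), B + t *: (B0 - B))).
  case: AB_V => -[U1 U2] /= [U1A U2B] U_V.
  have h1 : nbhs (0 : R) ((fun t : R => A + t *: (A0 - A)) @^-1` U1).
    by apply: segment_cont; rewrite scale0r addr0.
  have h2 : nbhs (0 : R) ((fun t : R => B + t *: (B0 - B)) @^-1` U2).
    by apply: segment_cont; rewrite scale0r addr0.
  by apply: filterS (filterI h1 h2) => t [t1 t2]; apply: U_V; split.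
have [e e0 e_V] := (nbhs_ballP _ _).1 near0.
have [q qE] := sym_gram_det_segment A B A0 B0.
have q0 : q != 0.
  apply: contraNneq det0 => q0; rewrite -[A0](addrNK A) -[B0](addrNK B) addrC [B0 - B + B]addrC.
  by rewrite -[A0 - A]scale1r -[B0 - B]scale1r -qE q0 horner0.
have [t [/andP [t0 te] qt]] := poly_nonroot_near0 q0 e0.
exists t; split; last by rewrite -qE.
by apply: e_V; rewrite -ball_normE /ball_ /= sub0r normrN gtr0_norm.
Qed.

End Density.

Section Generic.
Variables (R : realFieldType) (n : nat).
Local Notation nonsingular := [set AB : 'M[R]_n * 'M[R]_n | sym_gram_det AB.1 AB.2 != 0].

Lemma witness_sym_gram_det_neq0 : sym_gram_det (witness_sym R n) (witness_skew R n) != 0.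
Proof. exact/independent_sym_gram_det_neq0/witness_independent. Qed.

Lemma open_nonsingular : open nonsingular.
Proof.
apply: (@open_comp _ _ (fun AB : 'M[R]_n * 'M[R]_n => sym_gram_det AB.1 AB.2) [set x | x != 0]).
  by move=> AB _; exact: continuous_sym_gram_det.
exact: open_neq.
Qed.

Lemma generic_sym_family_independent : exists U : set ('M[R]_n * 'M[R]_n),
  open U /\ dense U /\ (forall AB, U AB -> sym_family_independent AB.1 AB.2).
Proof.
exists nonsingular; split; first exact: open_nonsingular.
split; last by move=> AB; exact: sym_gram_det_neq0_independent.
move=> O [[A B] OAB] oO.
have AB_O : nbhs (A, B) O by move: oO; rewrite openE => /(_ _ OAB).
have [t [Ot det_t]] := sym_gram_det_neq0_near witness_sym_gram_det_neq0 AB_O.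
by exists (A + t *: (witness_sym R n - A), B + t *: (witness_skew R n - B)).
Qed.

Lemma generic_sym_skew_family_independent : exists U : set ('M[R]_n * 'M[R]_n),
  open U /\
  (forall S N : 'M[R]_n, mx_is_symmetric S -> mx_is_skew N ->
     forall V, nbhs (S, N) V ->
       exists S' N' : 'M[R]_n, [/\ mx_is_symmetric S', mx_is_skew N', V (S', N') & U (S', N')]) /\
  (forall S N : 'M[R]_n, mx_is_symmetric S -> mx_is_skew N -> U (S, N) ->
     sym_family_independent S N).
Proof.
exists nonsingular; split; first exact: open_nonsingular.
split; last by move=> S N _ _; exact: sym_gram_det_neq0_independent.
move=> S N symS skewN V SN_V.
have [t [Vt det_t]] := sym_gram_det_neq0_near witness_sym_gram_det_neq0 SN_V.
exists (S + t *: (witness_sym R n - S)), (N + t *: (witness_skew R n - N)); split => //.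
  by rewrite /mx_is_symmetric linearD linearZ linearB /= symS witness_sym_is_symmetric.
by rewrite /mx_is_skew linearD linearZ linearB /= skewN witness_skew_is_skew -opprD scalerN opprD.
Qed.

End Generic.

Theorem lemma4p1 (R : realType) (n : nat) :
  (* (a) *)
  (forall (A B : 'M[R]_n) (i j : nat),
      lie_br (sym_ij i j.+1 A B) A + lie_br (sym_ij i.+1 j A B) B = 0)
  /\
  (* (b) *)
  (forall (S N : 'M[R]_n) (i j : nat), mx_is_symmetric S -> mx_is_skew N ->
      (~~ odd j -> mx_is_symmetric (sym_ij i j S N)) /\ (odd j -> mx_is_skew (sym_ij i j S N)))
  /\
  (* (c) *)
  (forall (A B : 'M[R]_n) (l : nat), (l <= n)%N ->
      exists c : nat -> nat -> R,
        sym_ij (n - l) l A B = \sum_(r < n) \sum_(s < n - r) c r s *: sym_ij r s A B)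
  /\
  (* (d), general pairs: an open dense set of pairs on which the family is independent *)
  (exists U : set ('M[R]_n * 'M[R]_n),
      open U /\ dense U /\ (forall AB, U AB -> sym_family_independent AB.1 AB.2))
  /\
  (* (d), symmetric/skew pairs: a relatively open, relatively dense subset of
     {(S,N) | S symmetric, N skew-symmetric} on which the family is independent *)
  (exists U : set ('M[R]_n * 'M[R]_n),
      open U /\
      (forall S N : 'M[R]_n, mx_is_symmetric S -> mx_is_skew N ->
         forall V, nbhs (S, N) V ->
           exists S' N' : 'M[R]_n, [/\ mx_is_symmetric S', mx_is_skew N', V (S', N') & U (S', N')]) /\
      (forall S N : 'M[R]_n, mx_is_symmetric S -> mx_is_skew N -> U (S, N) ->
         sym_family_independent S N)).
Proof.
split; first exact: lie_br_sym_ij.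
split; first by move=> S N i j; exact: sym_ij_tr.
split; first by move=> A B l; exact: sym_ij_top_span.
split; [exact: generic_sym_family_independent | exact: generic_sym_skew_family_independent].
Qed.
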